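(* Let $R$ be a commutative ring, $n\ge2$, and let $\varphi$ be a $2n\times2n$ alternating matrix over $R$ with Pfaffian $1$. Then ${\rm E}_{2n-1}(R)={\rm E}_\varphi(R)$.
   Context: ${\rm E}_m(R)$ is the subgroup of ${\rm SL}_m(R)$ generated by elementary matrices $I_m+\lambda e_{ij}$ ($i\neq j$, $\lambda\in R$). A square matrix is alternating if it is of the form $\nu-\nu^t$; alternating matrices of Pfaffian $1$ are invertible. Elements of $R^m$ are row vectors, ${}^t$ is transpose. For an invertible alternating $2n\times2n$ matrix $\varphi$ write $\varphi=\begin{pmatrix}0&-c\\ c^t&\nu\end{pmatrix}$, $\varphi^{-1}=\begin{pmatrix}0&d\\ -d^t&\mu\end{pmatrix}$ with $c,d\in R^{2n-1}$, and set $\alpha_\varphi(v)=I_{2n-1}+d^tv\nu$, $\beta_\varphi(v)=I_{2n-1}+\mu v^tc$; ${\rm E}_\varphi(R)$ is the subgroup of ${\rm GL}_{2n-1}(R)$ generated by all $\alpha_\varphi(v),\beta_\varphi(v)$, $v\in R^{2n-1}$. *)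

From HB Require Import structures.
From mathcomp Require Import all_boot all_order all_algebra all_fingroup.
Set Implicit Arguments. Unset Strict Implicit. Unset Printing Implicit Defensive.
Import GRing.Theory.
Local Open Scope ring_scope.

Section Defs.
Variable R : comNzRingType.

Definition alternating k (A : 'M[R]_k) : Prop := exists nu : 'M[R]_k, A = nu - nu^T.

Definition perm_nat k (s : 'S_k) (a : nat) : nat :=
  if (insub a : option 'I_k) is Some i then nat_of_ord (s i) else a.

Definition mx_nat k (A : 'M[R]_k) (a b : nat) : R :=
  match (insub a : option 'I_k), (insub b : option 'I_k) with
  | Some i, Some j => A i j
  | _, _ => 0
  end.

(* s encodes a perfect matching {s(0),s(1)},{s(2),s(3)},... in canonical form:
   s(2i) < s(2i+1) and s(0) < s(2) < s(4) < ... *)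
Definition pf_perm k (s : 'S_k) : bool :=
  [forall i : 'I_(k./2), perm_nat s (i.*2) < perm_nat s (i.*2).+1]%N &&
  [forall i : 'I_(k./2), (i.+1 < k./2)%N ==> (perm_nat s (i.*2) < perm_nat s (i.*2).+2)%N].

(* Pfaffian (meaningful for k even):
   Pf(A) = sum over perfect matchings of sgn(s) * prod_i a_{s(2i), s(2i+1)} *)
Definition pfaffian k (A : 'M[R]_k) : R :=
  \sum_(s : 'S_k | pf_perm s) (-1) ^+ odd_perm s *
     \prod_(i < k./2) mx_nat A (perm_nat s (i.*2)) (perm_nat s (i.*2).+1).

Inductive gen_group m (S : 'M[R]_m -> Prop) : 'M[R]_m -> Prop :=
| gg_gen A : S A -> gen_group S A
| gg_one : gen_group S 1%:M
| gg_mul A B : gen_group S A -> gen_group S B -> gen_group S (A *m B)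
| gg_inv A B : gen_group S A -> A *m B = 1%:M -> B *m A = 1%:M -> gen_group S B.

Definition elementary m (A : 'M[R]_m) : Prop :=
  exists (i j : 'I_m) (l : R), i != j /\ A = 1%:M + l *: delta_mx i j.

Definition E_group m : 'M[R]_m -> Prop := gen_group (@elementary m).

(* For phi (size 1+m) with inverse psi:
   phi = [[0, -c], [c^t, nu]], psi = [[0, d], [-d^t, mu]] *)
Definition phi_c m (phi : 'M[R]_(1 + m)) : 'rV[R]_m := - ursubmx phi.
Definition phi_nu m (phi : 'M[R]_(1 + m)) : 'M[R]_m := drsubmx phi.
Definition psi_d m (psi : 'M[R]_(1 + m)) : 'rV[R]_m := ursubmx psi.
Definition psi_mu m (psi : 'M[R]_(1 + m)) : 'M[R]_m := drsubmx psi.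

Definition alpha_phi m (phi psi : 'M[R]_(1 + m)) (v : 'rV[R]_m) : 'M[R]_m :=
  1%:M + (psi_d psi)^T *m v *m phi_nu phi.
Definition beta_phi m (phi psi : 'M[R]_(1 + m)) (v : 'rV[R]_m) : 'M[R]_m :=
  1%:M + psi_mu psi *m v^T *m phi_c phi.

Definition E_phi_group m (phi psi : 'M[R]_(1 + m)) : 'M[R]_m -> Prop :=
  gen_group (fun A => exists v : 'rV[R]_m, A = alpha_phi phi psi v \/ A = beta_phi phi psi v).
End Defs.

From HB Require Import structures.
From mathcomp Require Import all_boot all_order all_algebra all_fingroup.
From mathcomp Require Import ring zify.
Import GRing.Theory.
Local Open Scope ring_scope.
Set Implicit Arguments. Unset Strict Implicit. Unset Printing Implicit Defensive.

(* Put p := d^T and q := c.  The block form of phi psi = psi phi = 1 gives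
   q p = 1, q mu = 0, nu p = 0 and p q + mu nu = 1, so E_phi is the group
   G(p, q) generated by the transvections 1 + p w (w p = 0) and 1 + u q
   (q u = 0).  G(p, q) lies in E_m by Suslin's lemma: for m >= 3 a
   transvection 1 + x w with x unimodular is a product of elementary matrices.
   Conversely each elementary matrix e_ij(a) lies in G(p, q): split
   a = sum_s a q_s p_s and realise each summand through the commutator
   identity [1 + u f, 1 + y w] = 1 + (f y) u w. *)

Section Transvection.
Variables (R : comNzRingType) (m : nat).
Implicit Types (u x y : 'cV[R]_m) (w a b : 'rV[R]_m).

Definition transvection u w : 'M[R]_m := 1%:M + u *m w.

Lemma transvectionr0 u : transvection u 0 = 1%:M.
Proof. by rewrite /transvection mulmx0 addr0. Qed.

Lemma transvection0l w : transvection 0 w = 1%:M.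
Proof. by rewrite /transvection mul0mx addr0. Qed.

Lemma mul_transvection x a y b : transvection x a *m transvection y b =
  1%:M + x *m a + y *m b + x *m (a *m y) *m b.
Proof.
rewrite /transvection mulmxDl mul1mx [x *m a *m _]mulmxDr mulmx1 !mulmxA.
by rewrite addrA [1%:M + _ + _]addrAC.
Qed.

Lemma transvectionDr x a b : a *m x = 0 ->
  transvection x (a + b) = transvection x a *m transvection x b.
Proof.
move=> ax0; rewrite mul_transvection ax0 mulmx0 mul0mx addr0.
by rewrite /transvection mulmxDr addrA.
Qed.

Lemma transvectionDl x y w : w *m y = 0 ->
  transvection (x + y) w = transvection x w *m transvection y w.
Proof.
move=> wy0; rewrite mul_transvection wy0 mulmx0 mul0mx addr0.
by rewrite /transvection mulmxDl addrA.
Qed.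

Lemma transvectionK x w : w *m x = 0 ->
  transvection x w *m transvection x (- w) = 1%:M.
Proof. by move=> wx0; rewrite -transvectionDr // subrr transvectionr0. Qed.

Lemma transvectionNK x w : w *m x = 0 ->
  transvection x (- w) *m transvection x w = 1%:M.
Proof.
by move=> wx0; rewrite -transvectionDr ?mulNmx ?wx0 ?oppr0 // addNr transvectionr0.
Qed.

Lemma conj_transvection (A B : 'M[R]_m) y w : A *m B = 1%:M ->
  A *m transvection y w *m B = transvection (A *m y) (w *m B).
Proof. by move=> AB1; rewrite /transvection mulmxDr mulmx1 mulmxDl AB1 !mulmxA. Qed.

Lemma transvectionZ (c : R) u w : transvection (c *: u) w = transvection u (c *: w).
Proof. by rewrite /transvection -scalemxAl scalemxAr. Qed.

Lemma trmx_transvection u w : (transvection u w)^T = transvection w^T u^T.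
Proof. by rewrite /transvection raddfD /= trmx1 trmx_mul. Qed.

End Transvection.

Section GeneratedGroup.
Variables (R : comNzRingType) (m : nat).
Implicit Types (S : 'M[R]_m -> Prop) (u x y : 'cV[R]_m) (f w : 'rV[R]_m).

Lemma gen_group_sub S S' : (forall A, S A -> gen_group S' A) ->
  forall A, gen_group S A -> gen_group S' A.
Proof.
move=> SS' A; elim=> {A} [A /SS' // | | A B _ GA _ GB | A B _ GA AB1 BA1].
- exact: gg_one.
- exact: gg_mul.
- exact: gg_inv GA AB1 BA1.
Qed.

Lemma gen_group_trmx S S' : (forall A, S A -> S' A^T) ->
  forall A, gen_group S A -> gen_group S' A^T.
Proof.
move=> SS' A; elim=> {A} [A /SS' | | A B _ GA _ GB | A B _ GA AB1 BA1].
- exact: gg_gen.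
- by rewrite trmx1; apply: gg_one.
- by rewrite trmx_mul; apply: gg_mul.
- by apply: (gg_inv GA); rewrite -trmx_mul ?AB1 ?BA1 trmx1.
Qed.

Variable S : 'M[R]_m -> Prop.
Local Notation G := (gen_group S).

Lemma gen_group_transvectionN x w : w *m x = 0 ->
  G (transvection x w) -> G (transvection x (- w)).
Proof.
by move=> wx0 Gxw; apply: (gg_inv Gxw); [apply: transvectionK | apply: transvectionNK].
Qed.

Lemma gen_group_transvection_comm u f y w :
  G (transvection u f) -> G (transvection y w) ->
  f *m u = 0 -> w *m y = 0 -> w *m u = 0 ->
  G (transvection u ((f *m y) 0 0 *: w)).
Proof.
move=> Guf Gyw fu0 wy0 wu0; set c := (f *m y) 0 0.
have fyc : f *m y = c%:M by rewrite [LHS]mx11_scalar.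
have conj_yw : transvection u f *m transvection y w *m transvection u (- f)
    = transvection (y + c *: u) w.
  rewrite conj_transvection; last exact: transvectionK.
  congr transvection.
    by rewrite /transvection mulmxDl mul1mx -mulmxA fyc mul_mx_scalar.
  by rewrite /transvection mulmxDr mulmx1 mulmxA wu0 mul0mx addr0.
have -> : transvection u (c *: w)
    = transvection (y + c *: u) w *m transvection y (- w).
  by rewrite addrC transvectionDl // -mulmxA transvectionK // mulmx1 transvectionZ.
rewrite -conj_yw; apply: gg_mul; last exact: gen_group_transvectionN.
by apply: gg_mul; [apply: gg_mul | apply: gen_group_transvectionN].
Qed.

Lemma gen_group_transvection_sumr x (I : finType) (F : I -> 'rV[R]_m) :
  (forall i, F i *m x = 0) -> (forall i, G (transvection x (F i))) ->
  G (transvection x (\sum_i F i)).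
Proof.
move=> Fx0 GF; suff [] : (\sum_i F i) *m x = 0 /\ G (transvection x (\sum_i F i)) by [].
apply: (big_ind (fun w => w *m x = 0 /\ G (transvection x w))) => //.
- by rewrite mul0mx transvectionr0; split=> //; apply: gg_one.
by move=> a b [ax0 Ga] [bx0 Gb]; rewrite mulmxDl ax0 bx0 addr0 transvectionDr //;
  split=> //; apply: gg_mul.
Qed.

Lemma gen_group_transvection_sumc w (I : finType) (F : I -> 'cV[R]_m) :
  (forall i, w *m F i = 0) -> (forall i, G (transvection (F i) w)) ->
  G (transvection (\sum_i F i) w).
Proof.
move=> wF0 GF; suff [] : w *m (\sum_i F i) = 0 /\ G (transvection (\sum_i F i) w) by [].
apply: (big_ind (fun u => w *m u = 0 /\ G (transvection u w))) => //.
- by rewrite mulmx0 transvection0l; split=> //; apply: gg_one.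
by move=> a b [wa0 Ga] [wb0 Gb]; rewrite mulmxDr wa0 wb0 addr0 transvectionDl //;
  split=> //; apply: gg_mul.
Qed.

End GeneratedGroup.

Definition pq_gen (R : comNzRingType) m (p : 'cV[R]_m) (q : 'rV[R]_m) (A : 'M[R]_m) :=
  (exists2 w, w *m p = 0 & A = transvection p w) \/
  (exists2 u, q *m u = 0 & A = transvection u q).

Notation pq_group p q := (gen_group (pq_gen p q)).

Section PairGroup.
Variables (R : comNzRingType) (m : nat).
Implicit Types (p u x : 'cV[R]_m) (q w y : 'rV[R]_m).

Lemma pq_group_trmx p q A : pq_group q^T p^T A -> pq_group p q A^T.
Proof.
move=> /(gen_group_trmx (S' := pq_gen p q)); apply=> B.
case=> [[w wq0 ->] | [u pu0 ->]]; rewrite trmx_transvection !trmxK.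
  by right; exists w^T; rewrite // -[q]trmxK -trmx_mul wq0 trmx0.
by left; exists u^T; rewrite // -[p]trmxK -trmx_mul pu0 trmx0.
Qed.

Variables (p : 'cV[R]_m) (q : 'rV[R]_m).
Hypothesis qp1 : q *m p = 1%:M.
Local Notation G := (pq_group p q).

Lemma pq_group_transvection_p w : w *m p = 0 -> G (transvection p w).
Proof. by move=> wp0; apply: gg_gen; left; exists w. Qed.

Lemma pq_group_transvection_q u : q *m u = 0 -> G (transvection u q).
Proof. by move=> qu0; apply: gg_gen; right; exists u. Qed.

Lemma pq_group_transvection_orth u w :
  q *m u = 0 -> w *m p = 0 -> w *m u = 0 -> G (transvection u w).
Proof.
move=> qu0 wp0 wu0.
have := gen_group_transvection_comm (pq_group_transvection_q qu0)
  (pq_group_transvection_p wp0) qu0 wp0 wu0.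
by rewrite qp1 mxE eqxx mulr1n scale1r.
Qed.

(* Split x along p and along the kernel of q. *)
Lemma pq_group_transvection_row x w :
  w *m p = 0 -> w *m x = 0 -> G (transvection x w).
Proof.
move=> wp0 wx0; rewrite -(subrK (p *m (q *m x)) x) transvectionDl; last first.
  by rewrite !mulmxA wp0 !mul0mx.
apply: gg_mul.
  apply: pq_group_transvection_orth => //.
  - by rewrite mulmxBr !mulmxA qp1 mul1mx subrr.
  - by rewrite mulmxBr !mulmxA wp0 !mul0mx wx0 subr0.
rewrite /transvection -mulmxA; apply: pq_group_transvection_p.
by rewrite -mulmxA wp0 mulmx0.
Qed.

Lemma pq_group_transvection_col u y :
  q *m u = 0 -> y *m u = 0 -> G (transvection u y).
Proof.
move=> qu0 yu0; rewrite -(subrK ((y *m p) *m q) y) transvectionDr; last first.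
  by rewrite mulmxBl -(mulmxA (y *m p)) qu0 mulmx0 yu0 subr0.
apply: gg_mul.
  apply: pq_group_transvection_orth => //.
  - by rewrite mulmxBl -(mulmxA (y *m p)) qp1 mulmx1 subrr.
  - by rewrite mulmxBl -(mulmxA (y *m p)) qu0 mulmx0 yu0 subr0.
rewrite /transvection mulmxA; apply: pq_group_transvection_q.
by rewrite mulmxA qu0 mul0mx.
Qed.

End PairGroup.

Section UnitVectors.
Variables (R : comNzRingType) (m : nat).

Definition col_unit (i : 'I_m) : 'cV[R]_m := delta_mx i 0.
Definition row_unit (j : 'I_m) : 'rV[R]_m := delta_mx 0 j.

Lemma row_unitE j (x : 'cV[R]_m) : row_unit j *m x = (x j 0)%:M.
Proof. by rewrite -rowE; apply/rowP => k; rewrite !ord1 !mxE eqxx mulr1n. Qed.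

Lemma mul_col_unitE i (w : 'rV[R]_m) : w *m col_unit i = (w 0 i)%:M.
Proof. by rewrite -colE; apply/colP => k; rewrite !ord1 !mxE eqxx mulr1n. Qed.

Lemma row_unit_mul_col_unit (A : 'M[R]_m) i j :
  row_unit i *m A *m col_unit j = (A i j)%:M.
Proof. by rewrite mul_col_unitE /row_unit -rowE mxE. Qed.

Lemma row_unit_col_unit_neq i j : j != i -> row_unit j *m col_unit i = 0.
Proof. exact: mul_delta_mx_0. Qed.

Lemma row_unit_col_unit i : row_unit i *m col_unit i = 1%:M.
Proof. by rewrite row_unitE mxE eqxx. Qed.

Lemma trmx_col_unit i : (col_unit i)^T = row_unit i.
Proof. exact: trmx_delta. Qed.

Lemma trmx_row_unit i : (row_unit i)^T = col_unit i.
Proof. exact: trmx_delta. Qed.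

Lemma col_sum_unit (u : 'cV[R]_m) : u = \sum_k u k 0 *: col_unit k.
Proof.
apply: trmx_inj; rewrite [LHS]row_sum_delta raddf_sum /=.
by apply: eq_bigr => k _; rewrite linearZ /= trmx_col_unit mxE.
Qed.

Lemma transvection_unit i j a :
  transvection (col_unit i) (a *: row_unit j) = 1%:M + a *: delta_mx i j.
Proof. by rewrite /transvection -scalemxAr mul_delta_mx. Qed.

End UnitVectors.
Arguments col_unit {R m}.
Arguments row_unit {R m}.
Arguments row_unit_col_unit {R m}.

Lemma ord_avoid2 m (i j : 'I_m) : (3 <= m)%N -> exists t : 'I_m, (t != i) && (t != j).
Proof.
move=> m3; apply/existsP; apply: contraTT m3 => /existsPn avoid.
have : [set: 'I_m] \subset [set i; j].
  by apply/subsetP => t _; have := avoid t; rewrite !inE negb_and !negbK orbC.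
move=> /subset_leq_card; rewrite cardsT card_ord cards2 -ltnNge => le_m2.
by apply: (leq_ltn_trans le_m2); case: (i != j).
Qed.

Section ElementaryInPairGroup.
Variables (R : comNzRingType) (m : nat).
Hypothesis m3 : (3 <= m)%N.

Section UnitTransvectionP.
Variables (p : 'cV[R]_m) (q : 'rV[R]_m).
Hypothesis qp1 : q *m p = 1%:M.
Local Notation G := (pq_group p q).

Lemma pq_group_unit_p i j r : i != j ->
  G (transvection (col_unit i) ((p j 0 * r) *: row_unit j)).
Proof.
move=> ij; have [t /andP [ti tj]] := ord_avoid2 i j m3.
(* f kills p and e_i, g is killed by q, and f g = p_j: the commutator of
   1 + e_i f and 1 + g w is 1 + p_j e_i w, which differs from the goal by a
   multiple of f. *)
have ji : j != i by rewrite eq_sym.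
have jt : j != t by rewrite eq_sym.
pose f := p t 0 *: row_unit j - p j 0 *: row_unit t.
pose g := q 0 t *: p - col_unit t.
pose w := (- r) *: (q 0 t *: f - row_unit j).
have fp0 : f *m p = 0.
  by rewrite mulmxBl -!scalemxAl !row_unitE !scale_scalar_mx mulrC subrr.
have fi0 : f *m col_unit i = 0.
  by rewrite mulmxBl -!scalemxAl !row_unit_col_unit_neq // !scaler0 subr0.
have fg : f *m g = (p j 0)%:M.
  rewrite mulmxBr -scalemxAr fp0 scaler0 sub0r mulmxBl -!scalemxAl.
  by rewrite row_unit_col_unit row_unit_col_unit_neq // scaler0 sub0r opprK scalemx1.
have wg0 : w *m g = 0.
  rewrite -scalemxAl mulmxBl -scalemxAl fg mulmxBr -scalemxAr row_unitE.
  by rewrite row_unit_col_unit_neq // subr0 subrr scaler0.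
have wi0 : w *m col_unit i = 0.
  rewrite -scalemxAl mulmxBl -scalemxAl fi0 row_unit_col_unit_neq //.
  by rewrite scaler0 subrr scaler0.
have qg0 : q *m g = 0.
  by rewrite mulmxBr -scalemxAr qp1 mul_col_unitE scalemx1 subrr.
have := gen_group_transvection_comm
  (pq_group_transvection_row qp1 fp0 fi0) (pq_group_transvection_col qp1 qg0 wg0)
  fi0 wg0 wi0.
rewrite fg mxE eqxx mulr1n => Gw.
have -> : (p j 0 * r) *: row_unit j = p j 0 *: w + (p j 0 * r * q 0 t) *: f.
  by apply/rowP => k; rewrite !mxE; ring.
rewrite transvectionDr; last by rewrite -scalemxAl wi0 scaler0.
apply: gg_mul => //; apply: (pq_group_transvection_row qp1).
  by rewrite -scalemxAl fp0 scaler0.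
by rewrite -scalemxAl fi0 scaler0.
Qed.

End UnitTransvectionP.

Lemma pq_group_unit_q (p : 'cV[R]_m) (q : 'rV[R]_m) i j r :
  q *m p = 1%:M -> i != j ->
  pq_group p q (transvection (col_unit i) ((q 0 i * r) *: row_unit j)).
Proof.
move=> qp1 ij; have ptqt1 : p^T *m q^T = 1%:M by rewrite -trmx_mul qp1 trmx1.
have := pq_group_unit_p ptqt1 r (i := j) (j := i); rewrite eq_sym => /(_ ij).
move=> /pq_group_trmx; rewrite trmx_transvection trmx_col_unit linearZ /=.
by rewrite trmx_row_unit mxE transvectionZ.
Qed.

Variables (p : 'cV[R]_m) (q : 'rV[R]_m).
Hypothesis qp1 : q *m p = 1%:M.
Local Notation G := (pq_group p q).

(* Decompose a = \sum_s a q_s p_s; the summand for s <> i, j is the commutator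
   of 1 + a p_s e_is and 1 + q_s e_sj. *)
Lemma pq_group_elementary i j a : i != j ->
  G (transvection (col_unit i) (a *: row_unit j)).
Proof.
move=> ij; have ji : j != i by rewrite eq_sym.
have qp_sum : \sum_s q 0 s * p s 0 = 1.
  by move/matrixP/(_ 0 0): qp1; rewrite !mxE eqxx mulr1n.
rewrite -[a]mulr1 -qp_sum mulr_sumr scaler_suml.
apply: gen_group_transvection_sumr => s.
  by rewrite -scalemxAl row_unit_col_unit_neq // scaler0.
case: (eqVneq s j) => [-> | sj].
  by rewrite [q 0 j * _]mulrC mulrCA; apply: pq_group_unit_p.
case: (eqVneq s i) => [-> | si].
  by rewrite mulrCA; apply: pq_group_unit_q.
have [i_s j_s] : i != s /\ j != s by rewrite ![_ == s]eq_sym.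
have orth (k l : 'I_m) (c : R) : l != k -> (c *: row_unit l) *m col_unit k = 0.
  by move=> lk; rewrite -scalemxAl row_unit_col_unit_neq // scaler0.
have := gen_group_transvection_comm (pq_group_unit_p qp1 a i_s)
  (pq_group_unit_q 1 qp1 sj) (orth _ _ _ si) (orth _ _ _ j_s) (orth _ _ _ ji).
rewrite -scalemxAl row_unit_col_unit scalemx1 mxE eqxx mulr1n scalerA.
by have -> : a * (q 0 s * p s 0) = p s 0 * a * (q 0 s * 1) by ring.
Qed.

Lemma E_sub_pq_group A : E_group A -> G A.
Proof.
apply: gen_group_sub => B [i [j [c [ij ->]]]].
by rewrite -transvection_unit; apply: pq_group_elementary.
Qed.

End ElementaryInPairGroup.

Section Suslin.
Variables (R : comNzRingType) (m : nat).
Implicit Types (u x : 'cV[R]_m) (w y z : 'rV[R]_m).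
Local Notation E := (@E_group R m).

Lemma E_transvection_col_unit s w :
  w *m col_unit s = 0 -> E (transvection (col_unit s) w).
Proof.
move=> ws0; have ws : w 0 s = 0.
  by move/matrixP/(_ 0 0): ws0; rewrite mul_col_unitE !mxE eqxx mulr1n.
rewrite [w]row_sum_delta; apply: gen_group_transvection_sumr => k;
  have [-> | ks] := eqVneq k s.
- by rewrite ws scale0r mul0mx.
- by rewrite -scalemxAl row_unit_col_unit_neq // scaler0.
- by rewrite ws scale0r transvectionr0; apply: gg_one.
apply: gg_gen; exists s, k, (w 0 k); split; first by rewrite eq_sym.
exact: transvection_unit.
Qed.

Lemma E_transvection_row_unit s u :
  row_unit s *m u = 0 -> E (transvection u (row_unit s)).
Proof.
move=> su0; have us : u s 0 = 0.
  by move/matrixP/(_ 0 0): su0; rewrite row_unitE !mxE eqxx mulr1n.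
rewrite [u]col_sum_unit; apply: gen_group_transvection_sumc => k;
  have [-> | ks] := eqVneq k s.
- by rewrite us scale0r mulmx0.
- by rewrite -scalemxAr row_unit_col_unit_neq ?scaler0 // eq_sym.
- by rewrite us scale0r transvection0l; apply: gg_one.
rewrite transvectionZ; apply: gg_gen; exists k, s, (u k 0); split => //.
exact: transvection_unit.
Qed.

Lemma E_transvection_orth_unit t x w :
  w *m col_unit t = 0 -> w *m x = 0 -> E (transvection x w).
Proof.
move=> wt0 wx0; have := pq_group_transvection_row (row_unit_col_unit t) wt0 wx0.
apply: gen_group_sub => B [[v vt0 ->] | [u tu0 ->]].
  exact: E_transvection_col_unit.
exact: E_transvection_row_unit.
Qed.

Definition skew_row x k l : 'rV[R]_m := x l 0 *: row_unit k - x k 0 *: row_unit l.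

Lemma skew_row_mul x k l : skew_row x k l *m x = 0.
Proof. by rewrite mulmxBl -!scalemxAl !row_unitE !scale_scalar_mx mulrC subrr. Qed.

(* w = \sum_k w_k (\sum_l z_l x_l) e_k - (\sum_k w_k x_k) z. *)
Lemma row_sum_skew x z w : z *m x = 1%:M -> w *m x = 0 ->
  w = \sum_k \sum_l (w 0 k * z 0 l) *: skew_row x k l.
Proof.
move=> zx1 wx0.
have zx_sum : \sum_l z 0 l * x l 0 = 1.
  by move/matrixP/(_ 0 0): zx1; rewrite !mxE eqxx mulr1n.
have wx_sum : \sum_k w 0 k * x k 0 = 0.
  by move/matrixP/(_ 0 0): wx0; rewrite !mxE.
transitivity (\sum_k w 0 k *: row_unit k - (\sum_k w 0 k * x k 0) *: z).
  by rewrite wx_sum scale0r subr0 -row_sum_delta.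
rewrite scaler_suml -sumrB; apply: eq_bigr => k _.
under eq_bigr do rewrite scalerBr !scalerA.
rewrite sumrB -!scaler_suml; congr (_ *: _ - _).
  by rewrite -[LHS]mulr1 -zx_sum mulr_sumr; apply: eq_bigr => l _; rewrite mulrA.
rewrite {1}[z]row_sum_delta scaler_sumr; apply: eq_bigr => l _.
by rewrite scalerA mulrAC.
Qed.

Hypothesis m3 : (3 <= m)%N.

(* Suslin: w is a combination of the rows x_l e_k - x_k e_l, each of which
   kills some unit column e_t since m >= 3. *)
Lemma E_transvection_unimodular_col x z w :
  z *m x = 1%:M -> w *m x = 0 -> E (transvection x w).
Proof.
move=> zx1 wx0; rewrite (row_sum_skew zx1 wx0).
have skew_scaled_mul c k l : (c *: skew_row x k l) *m x = 0.
  by rewrite -scalemxAl skew_row_mul scaler0.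
apply: gen_group_transvection_sumr => k.
  by rewrite mulmx_suml big1.
apply: gen_group_transvection_sumr => l //.
have [<- | kl] := eqVneq k l.
  by rewrite /skew_row subrr scaler0 transvectionr0; apply: gg_one.
have [t /andP [tk tl]] := ord_avoid2 k l m3.
have [kt lt] : k != t /\ l != t by rewrite ![_ == t]eq_sym.
apply: (E_transvection_orth_unit (t := t)) => //.
rewrite -scalemxAl /skew_row mulmxBl -!scalemxAl !row_unit_col_unit_neq //.
by rewrite !scaler0 subrr scaler0.
Qed.

Lemma elementary_trmx (A : 'M[R]_m) : elementary A -> elementary A^T.
Proof.
case=> i [j [c [ij ->]]]; exists j, i, c; split; first by rewrite eq_sym.
by rewrite raddfD /= trmx1 linearZ /= trmx_delta.
Qed.

Lemma E_transvection_unimodular_row u y (z : 'cV[R]_m) :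
  y *m z = 1%:M -> y *m u = 0 -> E (transvection u y).
Proof.
move=> yz1 yu0; rewrite -[transvection u y]trmxK trmx_transvection.
apply: (gen_group_trmx elementary_trmx).
apply: (E_transvection_unimodular_col (z := z^T)); rewrite -trmx_mul.
  by rewrite yz1 trmx1.
by rewrite yu0 trmx0.
Qed.

Lemma pq_group_sub_E p q A : q *m p = 1%:M -> pq_group p q A -> E A.
Proof.
move=> qp1; apply: gen_group_sub => B [[w wp0 ->] | [u qu0 ->]].
  exact: E_transvection_unimodular_col qp1 wp0.
exact: E_transvection_unimodular_row qp1 qu0.
Qed.

End Suslin.

Section Alternating.
Variables (R : comNzRingType) (k : nat) (A : 'M[R]_k).
Hypothesis A_alt : alternating A.

Lemma alternating_trmx : A^T = - A.
Proof. by case: A_alt => N ->; rewrite raddfB /= trmxK opprB. Qed.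

Lemma alternating_diag i : A i i = 0.
Proof. by case: A_alt => N ->; rewrite !mxE subrr. Qed.

Lemma alternating_form (x : 'rV[R]_k) : x *m A *m x^T = 0.
Proof.
case: A_alt => N ->; rewrite mulmxBr mulmxBl.
have -> : x *m N^T *m x^T = (x *m N *m x^T)^T by rewrite !trmx_mul trmxK mulmxA.
by rewrite {2}[x *m N *m x^T]mx11_scalar tr_scalar_mx -mx11_scalar subrr.
Qed.

End Alternating.

Section AlternatingInverse.
Variables (R : comNzRingType) (m : nat) (phi psi : 'M[R]_(1 + m)).
Hypothesis phi_alt : alternating phi.
Hypotheses (phi_psi : phi *m psi = 1%:M) (psi_phi : psi *m phi = 1%:M).

Lemma trmx_alternating_inv : psi^T = - psi.
Proof.
have psi_tr_inv : (- psi^T) *m phi = 1%:M.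
  by rewrite mulNmx -mulmxN -alternating_trmx // -trmx_mul phi_psi trmx1.
have psi_eq : psi = - psi^T by rewrite -{1}[psi]mul1mx -psi_tr_inv -mulmxA phi_psi mulmx1.
by rewrite [in RHS]psi_eq opprK.
Qed.

(* psi = psi phi psi, and psi e_i = -(e_i psi)^T since psi is skew. *)
Lemma alternating_inv_diag i : psi i i = 0.
Proof.
have psi_col : psi *m col_unit i = - (row_unit i *m psi)^T.
  by rewrite trmx_mul trmx_alternating_inv mulNmx opprK trmx_row_unit.
suff : row_unit i *m psi *m col_unit i = 0.
  by rewrite row_unit_mul_col_unit => /matrixP/(_ 0 0); rewrite !mxE eqxx mulr1n.
rewrite -[psi in _ *m psi *m _]mul1mx -psi_phi !mulmxA -mulmxA psi_col.
by rewrite mulmxN alternating_form // oppr0.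
Qed.

Local Notation p := (psi_d psi)^T.
Local Notation q := (phi_c phi).
Local Notation nu := (phi_nu phi).
Local Notation mu := (psi_mu psi).

Lemma alternating_inv_blocks :
  [/\ q *m p = 1%:M, q *m mu = 0, nu *m p = 0 & p *m q + mu *m nu = 1%:M].
Proof.
have ul_phi : ulsubmx phi = 0.
  by apply/matrixP => i j; rewrite !ord1 !mxE alternating_diag.
have ul_psi : ulsubmx psi = 0.
  by apply/matrixP => i j; rewrite !ord1 !mxE alternating_inv_diag.
have dl_psi : dlsubmx psi = - p.
  apply/matrixP => i j; move/matrixP/(_ (rshift 1 i) (lshift m j)): trmx_alternating_inv.
  by rewrite /psi_d !mxE => ->; rewrite opprK.
move: phi_psi psi_phi; rewrite -{1 2}[phi]submxK -{1 2}[psi]submxK !mulmx_block.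
rewrite [1%:M](scalar_mx_block 1 m).
move=> /eq_block_mx [qp qmu nup _] /eq_block_mx [_ _ _ pq].
move: qp qmu nup pq; rewrite ul_phi ul_psi dl_psi !mul0mx !mulmx0 !add0r.
rewrite /phi_c /phi_nu /psi_mu !mulmxN !mulNmx => qp qmu.
move=> /eqP; rewrite oppr_eq0 => /eqP nup pq.
by split; rewrite ?mulmxN ?mulNmx ?qmu ?oppr0.
Qed.

Lemma E_phi_groupE A : E_phi_group phi psi A <-> pq_group p q A.
Proof.
have [_ qmu0 nup0 pq_mu_nu] := alternating_inv_blocks.
split; apply: gen_group_sub => B.
  case=> v [-> | ->]; apply: gg_gen.
    left; exists (v *m nu); first by rewrite -mulmxA nup0 mulmx0.
    by rewrite /alpha_phi /transvection mulmxA.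
  by right; exists (mu *m v^T); first by rewrite mulmxA qmu0 mul0mx.
case=> [[w wp0 ->] | [u qu0 ->]]; apply: gg_gen.
  have wmunu : w *m mu *m nu = w.
    have := congr1 (mulmx w) pq_mu_nu.
    by rewrite mulmxDr mulmx1 !mulmxA wp0 mul0mx add0r.
  by exists (w *m mu); left; rewrite /alpha_phi /transvection -mulmxA wmunu.
have munu_u : mu *m (nu *m u) = u.
  have := congr1 (mulmx^~ u) pq_mu_nu.
  by rewrite mulmxDl mul1mx -!mulmxA qu0 mulmx0 add0r.
by exists (nu *m u)^T; right; rewrite /beta_phi /transvection trmxK munu_u.
Qed.

End AlternatingInverse.

Unset Implicit Arguments.

(* Only invertibility of phi matters: the Pfaffian hypothesis hpf is what makes
   phi invertible, and here its inverse psi is given. *)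
Theorem theorem5p1 (R : comNzRingType) (n : nat) (hn : (2 <= n)%N)
  (phi : 'M[R]_(1 + (n.*2).-1))
  (halt : alternating phi) (hpf : pfaffian phi = 1)
  (psi : 'M[R]_(1 + (n.*2).-1))
  (hpsi1 : phi *m psi = 1%:M) (hpsi2 : psi *m phi = 1%:M) :
  forall A : 'M[R]_((n.*2).-1), E_group A <-> E_phi_group phi psi A.
Proof.
move=> A; have m3 : (3 <= (n.*2).-1)%N by lia.
have [qp1 _ _ _] := alternating_inv_blocks halt hpsi1 hpsi2.
rewrite E_phi_groupE //; split=> GA.
  exact (E_sub_pq_group m3 qp1 GA).
exact (pq_group_sub_E m3 qp1 GA).
Qed.
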